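(* Consider the sub-$\ell^\infty$ structure on $\mathbb{R}^3$ defined by $Y_1=\partial_x+\partial_y+y^2\partial_z$, $Y_2=\partial_x-\partial_y+y^2\partial_z$. If an extremal pair $(\lambda,\gamma)$ restricted to an open interval $I$ is an abnormal arc and $\gamma$ is not constant on $I$, then $u_1=u_2$ a.e. on $I$ and $\gamma(I)$ is contained in a line $\{y=0,\ z=z_0\}$ for some $z_0\in\mathbb{R}$. Conversely, every admissible trajectory contained in such a line admits an extremal lift whose restriction to its whole domain is an abnormal arc.
   Context: Sub-$\ell^\infty$ structure defined by smooth vector fields $X_1,\dots,X_k$ on a manifold $M$ (here $X_1=Y_1$, $X_2=Y_2$): an admissible trajectory is an absolutely continuous curve $\gamma:[0,T]\to M$ together with a measurable control $u=(u_1,\dots,u_k):[0,T]\to\mathbb{R}^k$ with $|u_i(t)|\le1$ for all $i$ and a.e. $t$, such that $\dot\gamma(t)=\sum_i u_i(t)X_i(\gamma(t))$ for a.e. $t$. An extremal pair is a pair $(\lambda,\gamma)$ where $\gamma$ is admissible with control $u$ and $\lambda:[0,T]\to T^*M$ is absolutely continuous with $\lambda(t)\in T^*_{\gamma(t)}M\setminus\{0\}$, such that, with $\mathcal H(\lambda,p,u)=\sum_i u_i\langle\lambda,X_i(p)\rangle$, in canonical coordinates $\dot\lambda=-\partial_p\mathcal H(\lambda,\gamma,u)$, $\dot\gamma=\partial_\lambda\mathcal H(\lambda,\gamma,u)$ a.e., and there is a constant $\lambda_0\ge0$ with $\sum_iu_i(t)\langle\lambda(t),X_i(\gamma(t))\rangle=\sum_i|\langle\lambda(t),X_i(\gamma(t))\rangle|=\lambda_0$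 for a.e. $t$; $\gamma$ is then an extremal trajectory and $\lambda$ an extremal lift. The switching functions are $\varphi_j(t)=\langle\lambda(t),X_j(\gamma(t))\rangle$. The restriction of an extremal pair to an open interval $I$ is an abnormal arc if $\varphi_j\equiv0$ on $I$ for all $j=1,\dots,k$. *)

From Stdlib Require Import Reals Lra.
Open Scope R_scope.

(** Points of R^3 and covectors (identified with R^3 via the standard basis). *)
Definition pt : Type := (R * R * R)%type.
Definition px (p : pt) : R := fst (fst p).
Definition py (p : pt) : R := snd (fst p).
Definition pz (p : pt) : R := snd p.
Definition mkpt (x y z : R) : pt := (x, y, z).
Definition setx (p : pt) (s : R) : pt := mkpt s (py p) (pz p).
Definition sety (p : pt) (s : R) : pt := mkpt (px p) s (pz p).
Definition setz (p : pt) (s : R) : pt := mkpt (px p) (py p) s.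

Definition Y1 (p : pt) : pt := mkpt 1 1 (py p ^ 2).
Definition Y2 (p : pt) : pt := mkpt 1 (-1) (py p ^ 2).

Definition pairing (l v : pt) : R := px l * px v + py l * py v + pz l * pz v.

Definition Ham (l p : pt) (u1 u2 : R) : R :=
  u1 * pairing l (Y1 p) + u2 * pairing l (Y2 p).

(** Interval covers and Lebesgue outer measure. [cover A s]: A is covered by
    countably many open intervals of total length <= s  (i.e. m*(A) <= s up to
    the choice of cover). *)
Definition cover (A : R -> Prop) (s : R) : Prop :=
  exists a b : nat -> R,
    (forall n, a n <= b n) /\
    (forall t, A t -> exists n, a n < t < b n) /\
    (forall n, sum_f_R0 (fun k => b k - a k) n <= s).

Definition null (N : R -> Prop) : Prop := forall eps, 0 < eps -> cover N eps.

Definition ae_on (S : R -> Prop) (P : R -> Prop) : Prop :=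
  exists N, null N /\ forall t, S t -> ~ N t -> P t.

(** Lebesgue measurable sets (Caratheodory criterion for Lebesgue outer measure):
    m*(A) >= m*(A /\ E) + m*(A \ E) for all A. *)
Definition meas_set (E : R -> Prop) : Prop :=
  forall (A : R -> Prop) (s : R),
    (forall eps, 0 < eps -> cover A (s + eps)) ->
    forall eps, 0 < eps ->
      exists s1 s2, cover (fun t => A t /\ E t) s1 /\
                    cover (fun t => A t /\ ~ E t) s2 /\ s1 + s2 <= s + eps.

Definition measurable_on (T : R) (f : R -> R) : Prop :=
  forall c, meas_set (fun t => 0 <= t <= T /\ f t < c).

Fixpoint fsum (g : nat -> R) (n : nat) : R :=
  match n with O => 0 | S m => fsum g m + g m end.

Definition abs_cont (f : R -> R) (a b : R) : Prop :=
  forall eps, 0 < eps -> exists delta, 0 < delta /\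
    forall (n : nat) (x y : nat -> R),
      (forall k, (k < n)%nat -> a <= x k /\ x k <= y k /\ y k <= b) ->
      (forall k, (S k < n)%nat -> y k <= x (S k)) ->
      fsum (fun k => y k - x k) n < delta ->
      fsum (fun k => Rabs (f (y k) - f (x k))) n < eps.

Definition abs_cont_pt (g : R -> pt) (a b : R) : Prop :=
  abs_cont (fun t => px (g t)) a b /\ abs_cont (fun t => py (g t)) a b /\
  abs_cont (fun t => pz (g t)) a b.

Definition admissible (T : R) (gamma : R -> pt) (u1 u2 : R -> R) : Prop :=
  0 <= T /\
  abs_cont_pt gamma 0 T /\
  measurable_on T u1 /\ measurable_on T u2 /\
  ae_on (fun t => 0 <= t <= T) (fun t => Rabs (u1 t) <= 1 /\ Rabs (u2 t) <= 1) /\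
  ae_on (fun t => 0 < t < T) (fun t =>
    derivable_pt_lim (fun s => px (gamma s)) t
      (u1 t * px (Y1 (gamma t)) + u2 t * px (Y2 (gamma t))) /\
    derivable_pt_lim (fun s => py (gamma s)) t
      (u1 t * py (Y1 (gamma t)) + u2 t * py (Y2 (gamma t))) /\
    derivable_pt_lim (fun s => pz (gamma s)) t
      (u1 t * pz (Y1 (gamma t)) + u2 t * pz (Y2 (gamma t)))).

Definition phi1 (gamma lam : R -> pt) (t : R) : R := pairing (lam t) (Y1 (gamma t)).
Definition phi2 (gamma lam : R -> pt) (t : R) : R := pairing (lam t) (Y2 (gamma t)).

(** Hamiltonian system at time t:
    dlambda/dt = - d_p H,  dgamma/dt = d_lambda H  (coordinatewise). *)
Definition hamilton_at (gamma lam : R -> pt) (u1 u2 : R -> R) (t : R) : Prop :=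
  (exists l, derivable_pt_lim (fun s => Ham (lam t) (setx (gamma t) s) (u1 t) (u2 t)) (px (gamma t)) l
          /\ derivable_pt_lim (fun s => px (lam s)) t (- l)) /\
  (exists l, derivable_pt_lim (fun s => Ham (lam t) (sety (gamma t) s) (u1 t) (u2 t)) (py (gamma t)) l
          /\ derivable_pt_lim (fun s => py (lam s)) t (- l)) /\
  (exists l, derivable_pt_lim (fun s => Ham (lam t) (setz (gamma t) s) (u1 t) (u2 t)) (pz (gamma t)) l
          /\ derivable_pt_lim (fun s => pz (lam s)) t (- l)) /\
  (exists l, derivable_pt_lim (fun s => Ham (setx (lam t) s) (gamma t) (u1 t) (u2 t)) (px (lam t)) l
          /\ derivable_pt_lim (fun s => px (gamma s)) t l) /\
  (exists l, derivable_pt_lim (fun s => Ham (sety (lam t) s) (gamma t) (u1 t) (u2 t)) (py (lam t)) l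
          /\ derivable_pt_lim (fun s => py (gamma s)) t l) /\
  (exists l, derivable_pt_lim (fun s => Ham (setz (lam t) s) (gamma t) (u1 t) (u2 t)) (pz (lam t)) l
          /\ derivable_pt_lim (fun s => pz (gamma s)) t l).

Definition extremal_pair (T : R) (gamma : R -> pt) (u1 u2 : R -> R) (lam : R -> pt) : Prop :=
  admissible T gamma u1 u2 /\
  abs_cont_pt lam 0 T /\
  (forall t, 0 <= t <= T -> lam t <> mkpt 0 0 0) /\
  ae_on (fun t => 0 < t < T) (hamilton_at gamma lam u1 u2) /\
  exists lam0, 0 <= lam0 /\
    ae_on (fun t => 0 <= t <= T) (fun t =>
      u1 t * phi1 gamma lam t + u2 t * phi2 gamma lam t = lam0 /\
      Rabs (phi1 gamma lam t) + Rabs (phi2 gamma lam t) = lam0).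

Definition abnormal_on (gamma lam : R -> pt) (a b : R) : Prop :=
  forall t, a < t < b -> phi1 gamma lam t = 0 /\ phi2 gamma lam t = 0.

From Stdlib Require Import Reals Lra Lia Classical.
From Coquelicot Require Import Coquelicot.
Open Scope R_scope.

(* On an abnormal arc both switching functions vanish, i.e. λ_y = 0 and λ_x + λ_z y^2 = 0.
   The adjoint equations give λ_x' = λ_z' = 0 a.e., so λ_x and λ_z are constant, λ_z ≠ 0
   because λ never vanishes, and y^2 = -λ_x/λ_z is constant.  Hence y' = u1 - u2 vanishes
   a.e. and y is constant.  Differentiating λ_y ≡ 0 gives (u1 + u2) λ_z y = 0 a.e.; if
   y ≠ 0 then u1 + u2 = 0 a.e. and γ would be constant, so y = 0 and z' = (u1 + u2) y^2 = 0.
   Conversely the constant covector dz annihilates Y1 and Y2 along {y = 0} and solves the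
   adjoint equations there.
   Every constancy claim rests on the fact that an absolutely continuous function whose
   derivative vanishes off a null set is constant, proved by real induction: off a small
   cover of the null set the function grows by at most eps per unit length, and absolute
   continuity controls its variation on the pieces of the cover. *)

Lemma fsum_ext g h n : (forall k, (k < n)%nat -> g k = h k) -> fsum g n = fsum h n.
Proof.
  induction n as [|n IH]; intros H; simpl; [reflexivity|].
  rewrite IH by (intros; apply H; lia). rewrite H by lia; reflexivity.
Qed.

Lemma fsum_le g h n : (forall k, (k < n)%nat -> g k <= h k) -> fsum g n <= fsum h n.
Proof.
  induction n as [|n IH]; intros H; simpl; [lra|].
  pose proof (IH (fun k Hk => H k ltac:(lia))); pose proof (H n ltac:(lia)); lra.
Qed.

Lemma fsum_zero n : fsum (fun _ => 0) n = 0.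
Proof. induction n as [|n IH]; simpl; [|rewrite IH]; ring. Qed.

Lemma fsum_ge0 g n : (forall k, 0 <= g k) -> 0 <= fsum g n.
Proof. intros H; rewrite <- (fsum_zero n); apply fsum_le; auto. Qed.

Lemma fsum_le_len g m n : (forall k, 0 <= g k) -> (m <= n)%nat -> fsum g m <= fsum g n.
Proof. intros H; induction 1; simpl; [lra|]. specialize (H m0); lra. Qed.

Lemma fsum_le_term g m n : (forall k, 0 <= g k) -> (m < n)%nat -> g m <= fsum g n.
Proof.
  intros H Hmn. apply Rle_trans with (fsum g (S m)); [|apply fsum_le_len; auto].
  simpl; pose proof (fsum_ge0 g m H); lra.
Qed.

Lemma fsum_sub g h n : fsum (fun k => g k - h k) n = fsum g n - fsum h n.
Proof. induction n as [|n IH]; simpl; [|rewrite IH]; ring. Qed.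

Lemma fsum_S_sum_f_R0 g n : fsum g (S n) = sum_f_R0 g n.
Proof. induction n as [|n IH]; simpl in *; [ring|rewrite <- IH; reflexivity]. Qed.

Lemma eq0_of_Rabs_le_eps x K : 0 <= K -> (forall eps, 0 < eps -> Rabs x <= eps * K + eps) -> x = 0.
Proof.
  intros HK H. destruct (Req_dec x 0) as [|Hx]; [assumption|exfalso].
  pose proof (Rabs_pos_lt x Hx) as Hpos.
  specialize (H (Rabs x / (2 * (K + 1))) ltac:(apply Rdiv_lt_0_compat; lra)).
  replace (Rabs x / (2 * (K + 1)) * K + Rabs x / (2 * (K + 1))) with (Rabs x / 2) in H
    by (field; lra).
  lra.
Qed.

Lemma real_induction (P : R -> Prop) c d : c <= d -> P c ->
  (forall m, c <= m <= d -> exists r, 0 < r /\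
     forall s s', m - r < s <= m -> m <= s' < m + r -> c <= s -> P s -> P s') ->
  P d.
Proof.
  intros Hcd Hc Hstep.
  set (S := fun s => c <= s <= d /\ P s).
  destruct (completeness S) as [m [Hub Hlub]].
  { exists d; intros s [Hs _]; lra. }
  { exists c; split; [lra|exact Hc]. }
  assert (Hm : c <= m <= d).
  { split; [apply Hub; split; [lra|exact Hc]|apply Hlub; intros s [Hs _]; lra]. }
  destruct (Hstep m Hm) as [r [Hr Hext]].
  assert (Hnear : exists s, S s /\ m - r < s).
  { apply NNPP; intros Hno. assert (m <= m - r); [|lra].
    apply Hlub; intros s Hs. apply Rnot_lt_le; intros Hlt. apply Hno; exists s; auto. }
  destruct Hnear as [s [[Hs HPs] Hsr]].
  assert (Hsm : s <= m) by (apply Hub; split; assumption).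
  pose proof (Rmin_l (m + r / 2) d); pose proof (Rmin_r (m + r / 2) d).
  assert (HP : P (Rmin (m + r / 2) d)).
  { apply (Hext s); [lra|split; [apply Rmin_glb|]; lra|lra|assumption]. }
  assert (Hle : Rmin (m + r / 2) d <= m).
  { apply Hub; split; [split; [apply Rmin_glb|]|]; auto; lra. }
  replace d with (Rmin (m + r / 2) d); [exact HP|].
  unfold Rmin in *; destruct Rle_dec; lra.
Qed.

Lemma derivable_pt_lim_0_small f t eps : 0 < eps -> derivable_pt_lim f t 0 ->
  exists r, 0 < r /\ forall s, Rabs (s - t) < r -> Rabs (f s - f t) <= eps * Rabs (s - t).
Proof.
  intros Heps Hd. destruct (Hd eps Heps) as [r Hr].
  exists r; split; [apply cond_pos|]. intros s Hs.
  destruct (Req_dec s t) as [->|Hne].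
  { rewrite !Rminus_diag, Rabs_R0; lra. }
  specialize (Hr (s - t) ltac:(lra) Hs).
  replace (t + (s - t)) with s in Hr by ring. rewrite Rminus_0_r in Hr.
  replace (f s - f t) with ((f s - f t) / (s - t) * (s - t)) by (field; lra).
  rewrite Rabs_mult. apply Rmult_le_compat_r; [apply Rabs_pos|lra].
Qed.

Lemma abs_cont_sub f a b c d : abs_cont f a b -> a <= c -> d <= b -> abs_cont f c d.
Proof.
  intros Hf Hac Hdb eps Heps. destruct (Hf eps Heps) as [delta [Hdelta Hvar]].
  exists delta; split; [exact Hdelta|]. intros n x y Hxy Hord Hlen.
  apply Hvar; [|exact Hord|exact Hlen]. intros k Hk; specialize (Hxy k Hk); lra.
Qed.

Section ZeroDerivative.

Variables (f : R -> R) (a b : R) (N : R -> Prop) (aa bb : nat -> R) (eps : R).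
Hypotheses (aa_le_bb : forall n, aa n <= bb n) (eps_pos : 0 < eps)
  (N_covered : forall t, N t -> exists n, aa n < t < bb n)
  (f_deriv0 : forall t, a < t < b -> ~ N t -> derivable_pt_lim f t 0).

Definition seg_len n s := Rmin (bb n) s - Rmin (aa n) s.

Definition cover_len M s := fsum (fun n => seg_len n s) M.

Lemma seg_len_ge0 n s : 0 <= seg_len n s.
Proof. pose proof (aa_le_bb n); unfold seg_len, Rmin; repeat destruct Rle_dec; lra. Qed.

Lemma seg_len_le n s : seg_len n s <= bb n - aa n.
Proof. pose proof (aa_le_bb n); unfold seg_len, Rmin; repeat destruct Rle_dec; lra. Qed.

Lemma seg_len_incr_ge0 n s s' : s <= s' -> 0 <= seg_len n s' - seg_len n s.
Proof. pose proof (aa_le_bb n); unfold seg_len, Rmin; repeat destruct Rle_dec; lra. Qed.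

Lemma seg_len_incr_inside n s s' : aa n < s -> s <= s' -> s' < bb n ->
  seg_len n s' - seg_len n s = s' - s.
Proof. unfold seg_len, Rmin; repeat destruct Rle_dec; lra. Qed.

Lemma cover_len_incr M s s' :
  cover_len M s' - cover_len M s = fsum (fun n => seg_len n s' - seg_len n s) M.
Proof. unfold cover_len; rewrite fsum_sub; reflexivity. Qed.

Lemma cover_len_mono M s s' : s <= s' -> cover_len M s <= cover_len M s'.
Proof.
  intros Hs. pose proof (fsum_ge0 _ M (fun n => seg_len_incr_ge0 n s s' Hs)) as H.
  rewrite <- cover_len_incr in H; lra.
Qed.

Lemma cover_len_le_incr M M' s s' : (M <= M')%nat -> s <= s' ->
  cover_len M s' - cover_len M s <= cover_len M' s' - cover_len M' s.
Proof.
  intros HM Hs. rewrite !cover_len_incr.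
  apply fsum_le_len; [intros; apply seg_len_incr_ge0|]; assumption.
Qed.

Lemma seg_len_le_cover_incr M m s s' : (m < M)%nat -> s <= s' ->
  seg_len m s' - seg_len m s <= cover_len M s' - cover_len M s.
Proof.
  intros Hm Hs. rewrite cover_len_incr.
  apply (fsum_le_term (fun n => seg_len n s' - seg_len n s)); [|assumption].
  intros; apply seg_len_incr_ge0; assumption.
Qed.

(* Off finitely many disjoint subintervals of [[c, s]], of total length at most the part
   of the cover lying in [[c, s]], [f] grows by at most [eps] per unit length. *)
Definition controlled c s : Prop :=
  exists n (x y : nat -> R) M,
    (forall k, (k < n)%nat -> c <= x k /\ x k <= y k /\ y k <= s) /\
    (forall k, (S k < n)%nat -> y k <= x (S k)) /\
    fsum (fun k => y k - x k) n <= cover_len M s - cover_len M c /\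
    Rabs (f s - f c) <= eps * (s - c) + fsum (fun k => Rabs (f (y k) - f (x k))) n.

Lemma controlled_refl c : controlled c c.
Proof.
  exists O, (fun _ => 0), (fun _ => 0), O; simpl.
  split; [intros; lia|]. split; [intros; lia|].
  unfold cover_len; simpl. split; [lra|]. rewrite Rminus_diag, Rabs_R0; lra.
Qed.

Lemma controlled_step_slow c s s' : c <= s -> s <= s' ->
  Rabs (f s' - f s) <= eps * (s' - s) -> controlled c s -> controlled c s'.
Proof.
  intros Hcs Hss' Hf [n [x [y [M [Hxy [Hord [Hlen Hvar]]]]]]].
  exists n, x, y, M. split; [|split; [exact Hord|split]].
  - intros k Hk; specialize (Hxy k Hk); repeat split; lra.
  - pose proof (cover_len_mono M s s' Hss'); lra.
  - replace (f s' - f c) with ((f s - f c) + (f s' - f s)) by ring.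
    pose proof (Rabs_triang (f s - f c) (f s' - f s)); lra.
Qed.

Lemma controlled_step_cover c s s' m : c <= s -> aa m < s -> s <= s' -> s' < bb m ->
  controlled c s -> controlled c s'.
Proof.
  intros Hcs Has Hss' Hs'b [n [x [y [M [Hxy [Hord [Hlen Hvar]]]]]]].
  set (x' := fun k => if Nat.ltb k n then x k else s).
  set (y' := fun k => if Nat.ltb k n then y k else s').
  assert (Hold : forall g : R -> R -> R,
    fsum (fun k => g (y' k) (x' k)) (S n) = fsum (fun k => g (y k) (x k)) n + g s' s).
  { intros g; simpl. unfold x', y'. rewrite Nat.ltb_irrefl. f_equal.
    apply fsum_ext; intros k Hk. apply Nat.ltb_lt in Hk; rewrite Hk; reflexivity. }
  exists (S n), x', y', (Nat.max M (S m)). split; [|split; [|split]].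
  - intros k Hk; unfold x', y'. destruct (Nat.ltb_spec k n); [|lra].
    specialize (Hxy k ltac:(assumption)); repeat split; lra.
  - intros k Hk; unfold x', y'.
    destruct (Nat.ltb_spec k n), (Nat.ltb_spec (S k) n); try lia.
    + apply Hord; assumption.
    + specialize (Hxy k ltac:(assumption)); lra.
  - rewrite (Hold (fun v u => v - u)).
    pose proof (cover_len_le_incr M (Nat.max M (S m)) c s ltac:(lia) Hcs).
    pose proof (seg_len_le_cover_incr (Nat.max M (S m)) m s s' ltac:(lia) Hss').
    rewrite seg_len_incr_inside in H0 by assumption. lra.
  - rewrite (Hold (fun v u => Rabs (f v - f u))).
    replace (f s' - f c) with ((f s - f c) + (f s' - f s)) by ring.
    pose proof (Rabs_triang (f s - f c) (f s' - f s)).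
    pose proof (Rmult_le_compat_l eps (s - c) (s' - c) ltac:(lra) ltac:(lra)). lra.
Qed.

Lemma controlled_local_step c m : a < c -> c <= m < b -> exists r, 0 < r /\
  forall s s', m - r < s <= m -> m <= s' < m + r -> c <= s -> controlled c s -> controlled c s'.
Proof.
  intros Hac Hm. destruct (classic (N m)) as [HN|HN].
  - destruct (N_covered m HN) as [k Hk].
    exists (Rmin (m - aa k) (bb k - m)); split; [apply Rmin_glb_lt; lra|].
    pose proof (Rmin_l (m - aa k) (bb k - m)); pose proof (Rmin_r (m - aa k) (bb k - m)).
    intros s s' Hs Hs' Hcs. apply (controlled_step_cover c s s' k); lra.
  - destruct (derivable_pt_lim_0_small f m eps eps_pos (f_deriv0 m ltac:(lra) HN))
      as [r [Hr Hsmall]].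
    exists r; split; [exact Hr|]. intros s s' Hs Hs' Hcs.
    apply controlled_step_slow; [lra|lra|].
    pose proof (Hsmall s ltac:(rewrite Rabs_left1; lra)) as Hl.
    pose proof (Hsmall s' ltac:(rewrite Rabs_right; lra)) as Hr'.
    rewrite (Rabs_left1 (s - m)) in Hl by lra. rewrite (Rabs_right (s' - m)) in Hr' by lra.
    replace (f s' - f s) with ((f s' - f m) + (f m - f s)) by ring.
    pose proof (Rabs_triang (f s' - f m) (f m - f s)) as Htri.
    rewrite (Rabs_minus_sym (f m)) in Htri. lra.
Qed.

End ZeroDerivative.

Lemma abs_cont_deriv0_const f a b N : abs_cont f a b -> null N ->
  (forall t, a < t < b -> ~ N t -> derivable_pt_lim f t 0) ->
  forall c d, a < c < b -> a < d < b -> f c = f d.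
Proof.
  intros Hf HN Hder.
  assert (Hle : forall c d, a < c -> c <= d -> d < b -> f d = f c).
  { intros c d Hac Hcd Hdb. apply Rminus_diag_uniq, (eq0_of_Rabs_le_eps _ (d - c)); [lra|].
    intros eps Heps. destruct (Hf eps Heps) as [delta [Hdelta Hvar]].
    destruct (HN (delta / 2) ltac:(lra)) as [aa [bb [Hab [Hcov Hsum]]]].
    destruct (real_induction (controlled f aa bb eps c) c d Hcd (controlled_refl f aa bb eps c)
      (fun m Hm => controlled_local_step f a b N aa bb eps Hab Heps Hcov Hder c m Hac
                     ltac:(lra))) as [n [x [y [M [Hxy [Hord [Hlen Hest]]]]]]].
    assert (Hcover : cover_len aa bb M d - cover_len aa bb M c <= delta / 2).
    { pose proof (fsum_ge0 _ M (fun n => seg_len_ge0 aa bb Hab n c)).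
      pose proof (fsum_le _ _ M (fun n _ => seg_len_le aa bb Hab n d)).
      assert (fsum (fun n => bb n - aa n) M <= delta / 2).
      { destruct M; [simpl; lra|]. rewrite fsum_S_sum_f_R0; apply Hsum. }
      unfold cover_len; lra. }
    assert (Hsmall : fsum (fun k => Rabs (f (y k) - f (x k))) n < eps).
    { apply Hvar; [|exact Hord|lra]. intros k Hk; specialize (Hxy k Hk); repeat split; lra. }
    lra. }
  intros c d Hc Hd. destruct (Rle_dec c d).
  - symmetry; apply Hle; lra.
  - apply Hle; lra.
Qed.

Lemma pt_ext p q : px p = px q -> py p = py q -> pz p = pz q -> p = q.
Proof.
  destruct p as [[p1 p2] p3], q as [[q1 q2] q3]; unfold px, py, pz; simpl.
  intros -> -> ->; reflexivity.
Qed.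

Lemma velocityE p u v :
  u * px (Y1 p) + v * px (Y2 p) = u + v /\
  u * py (Y1 p) + v * py (Y2 p) = u - v /\
  u * pz (Y1 p) + v * pz (Y2 p) = (u + v) * py p ^ 2.
Proof. unfold Y1, Y2, mkpt, px, py, pz; simpl; repeat split; ring. Qed.

Lemma phi1E gamma lam t :
  phi1 gamma lam t = px (lam t) + py (lam t) + pz (lam t) * py (gamma t) ^ 2.
Proof. unfold phi1, pairing, Y1, mkpt, px, py, pz; simpl; ring. Qed.

Lemma phi2E gamma lam t :
  phi2 gamma lam t = px (lam t) - py (lam t) + pz (lam t) * py (gamma t) ^ 2.
Proof. unfold phi2, pairing, Y2, mkpt, px, py, pz; simpl; ring. Qed.

Lemma Ham_partials l p u v :
  derivable_pt_lim (fun s => Ham l (setx p s) u v) (px p) 0 /\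
  derivable_pt_lim (fun s => Ham l (sety p s) u v) (py p)
    ((u + v) * (pz l * (2 * py p))) /\
  derivable_pt_lim (fun s => Ham l (setz p s) u v) (pz p) 0 /\
  derivable_pt_lim (fun s => Ham (setx l s) p u v) (px l) (u + v) /\
  derivable_pt_lim (fun s => Ham (sety l s) p u v) (py l) (u - v) /\
  derivable_pt_lim (fun s => Ham (setz l s) p u v) (pz l) ((u + v) * py p ^ 2).
Proof.
  repeat split; apply is_derive_Reals;
    unfold Ham, pairing, Y1, Y2, setx, sety, setz, mkpt, px, py, pz; simpl;
    auto_derive; auto; ring.
Qed.

Definition hamilton_eqs (gamma lam : R -> pt) (u1 u2 : R -> R) (t : R) : Prop :=
  derivable_pt_lim (fun s => px (lam s)) t 0 /\
  derivable_pt_lim (fun s => py (lam s)) t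
    (- ((u1 t + u2 t) * (pz (lam t) * (2 * py (gamma t))))) /\
  derivable_pt_lim (fun s => pz (lam s)) t 0 /\
  derivable_pt_lim (fun s => px (gamma s)) t (u1 t + u2 t) /\
  derivable_pt_lim (fun s => py (gamma s)) t (u1 t - u2 t) /\
  derivable_pt_lim (fun s => pz (gamma s)) t ((u1 t + u2 t) * py (gamma t) ^ 2).

Lemma hamilton_atE gamma lam u1 u2 t :
  hamilton_at gamma lam u1 u2 t <-> hamilton_eqs gamma lam u1 u2 t.
Proof.
  destruct (Ham_partials (lam t) (gamma t) (u1 t) (u2 t)) as [Dx [Dy [Dz [Dlx [Dly Dlz]]]]].
  unfold hamilton_at, hamilton_eqs. split.
  - intros [[l1 [A1 B1]] [[l2 [A2 B2]] [[l3 [A3 B3]] [[l4 [A4 B4]] [[l5 [A5 B5]] [l6 [A6 B6]]]]]]].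
    rewrite (uniqueness_limite _ _ _ _ A1 Dx), Ropp_0 in B1.
    rewrite (uniqueness_limite _ _ _ _ A2 Dy) in B2.
    rewrite (uniqueness_limite _ _ _ _ A3 Dz), Ropp_0 in B3.
    rewrite (uniqueness_limite _ _ _ _ A4 Dlx) in B4.
    rewrite (uniqueness_limite _ _ _ _ A5 Dly) in B5.
    rewrite (uniqueness_limite _ _ _ _ A6 Dlz) in B6.
    repeat split; assumption.
  - intros [B1 [B2 [B3 [B4 [B5 B6]]]]]. rewrite <- Ropp_0 in B1, B3.
    repeat split; eexists; split; eassumption.
Qed.

Lemma derive_eq0_of_const_on f C a b t l : (forall s, a < s < b -> f s = C) -> a < t < b ->
  derivable_pt_lim f t l -> l = 0.
Proof.
  intros Hc Ht Hd.
  assert (Hloc : locally t (fun s => f s = C)).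
  { apply (filter_imp (fun s => a < s /\ s < b)); [exact Hc|].
    apply (open_and _ _ (open_gt a) (open_lt b)); exact Ht. }
  apply is_derive_Reals, (is_derive_ext_loc _ _ _ _ Hloc), is_derive_Reals in Hd.
  exact (uniqueness_limite _ _ _ _ Hd (derivable_pt_lim_const C t)).
Qed.

Lemma derive_eq0_of_sqr_const_on f C a b t l : (forall s, a < s < b -> f s ^ 2 = C) ->
  a < t < b -> derivable_pt_lim f t l -> l = 0.
Proof.
  intros Hc Ht Hd. destruct (Req_dec (f t) 0) as [Hft|Hft].
  - assert (Hzero : forall s, a < s < b -> f s = 0).
    { intros s Hs. pose proof (Hc s Hs) as Hs2; pose proof (Hc t Ht) as Ht2.
      rewrite Hft in Ht2. nra. }
    exact (derive_eq0_of_const_on f 0 a b t l Hzero Ht Hd).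
  - assert (Hsq : forall s, a < s < b -> mult_fct f f s = C).
    { intros s Hs; unfold mult_fct; rewrite <- (Hc s Hs); ring. }
    pose proof (derive_eq0_of_const_on _ C a b t _ Hsq Ht (derivable_pt_lim_mult f f t l l Hd Hd)).
    nra.
Qed.

Section AbnormalArc.

Variables (T a b : R) (gamma lam : R -> pt) (u1 u2 : R -> R) (N : R -> Prop).
Hypotheses (gamma_ac : abs_cont_pt gamma 0 T) (lam_ac : abs_cont_pt lam 0 T)
  (lam_neq0 : forall t, 0 <= t <= T -> lam t <> mkpt 0 0 0)
  (a_ge0 : 0 <= a) (a_lt_b : a < b) (b_le_T : b <= T) (N_null : null N)
  (ham : forall t, a < t < b -> ~ N t -> hamilton_eqs gamma lam u1 u2 t)
  (abn : abnormal_on gamma lam a b).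

Let mid := (a + b) / 2.

Let mid_in : a < mid < b.
Proof. unfold mid; lra. Qed.

Lemma const_on_arc f : abs_cont f 0 T ->
  (forall t, a < t < b -> ~ N t -> derivable_pt_lim f t 0) ->
  forall t, a < t < b -> f t = f mid.
Proof.
  intros Hf Hd t Ht.
  exact (abs_cont_deriv0_const f a b N (abs_cont_sub f 0 T a b Hf a_ge0 b_le_T) N_null Hd
           t mid Ht mid_in).
Qed.

Lemma abnormal_lam t : a < t < b ->
  py (lam t) = 0 /\ px (lam t) + pz (lam t) * py (gamma t) ^ 2 = 0.
Proof.
  intros Ht; destruct (abn t Ht) as [H1 H2].
  rewrite phi1E in H1; rewrite phi2E in H2; lra.
Qed.

Lemma lam_x_const t : a < t < b -> px (lam t) = px (lam mid).
Proof.
  apply (const_on_arc (fun s => px (lam s))); [apply lam_ac|].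
  intros s Hs HN; apply (ham s Hs HN).
Qed.

Lemma lam_z_const t : a < t < b -> pz (lam t) = pz (lam mid).
Proof.
  apply (const_on_arc (fun s => pz (lam s))); [apply lam_ac|].
  intros s Hs HN; apply (ham s Hs HN).
Qed.

Lemma lam_z_mid_neq0 : pz (lam mid) <> 0.
Proof.
  intros Hz. apply (lam_neq0 mid ltac:(lra)).
  destruct (abnormal_lam mid mid_in) as [Hy Hx]. rewrite Hz in Hx.
  apply pt_ext; unfold mkpt, px, py, pz in *; simpl; lra.
Qed.

Lemma gamma_y_sqr_const t : a < t < b -> py (gamma t) ^ 2 = - px (lam mid) / pz (lam mid).
Proof.
  intros Ht. pose proof lam_z_mid_neq0.
  destruct (abnormal_lam t Ht) as [_ Hrel]. rewrite lam_x_const, lam_z_const in Hrel by exact Ht.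
  field_simplify_eq; [lra|assumption].
Qed.

Lemma controls_eq t : a < t < b -> ~ N t -> u1 t = u2 t.
Proof.
  intros Ht HN. destruct (ham t Ht HN) as [_ [_ [_ [_ [Dy _]]]]].
  pose proof (derive_eq0_of_sqr_const_on _ _ a b t _ gamma_y_sqr_const Ht Dy); lra.
Qed.

Lemma gamma_y_const t : a < t < b -> py (gamma t) = py (gamma mid).
Proof.
  apply (const_on_arc (fun s => py (gamma s))); [apply gamma_ac|]. intros s Hs HN.
  destruct (ham s Hs HN) as [_ [_ [_ [_ [Dy _]]]]].
  rewrite (controls_eq s Hs HN), Rminus_diag in Dy.
  exact Dy.
Qed.

Lemma gamma_z_const_of_y_zero : py (gamma mid) = 0 ->
  forall t, a < t < b -> pz (gamma t) = pz (gamma mid).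
Proof.
  intros Hy0. apply (const_on_arc (fun s => pz (gamma s))); [apply gamma_ac|]. intros s Hs HN.
  destruct (ham s Hs HN) as [_ [_ [_ [_ [_ Dz]]]]].
  rewrite gamma_y_const, Hy0, pow_ne_zero, Rmult_0_r in Dz by (exact Hs || lia). exact Dz.
Qed.

Lemma gamma_y_mid_zero : ~ (exists c, forall t, a < t < b -> gamma t = c) -> py (gamma mid) = 0.
Proof.
  intros Hnc. apply NNPP; intros Hy. apply Hnc; exists (gamma mid).
  assert (Hsum : forall s, a < s < b -> ~ N s -> u1 s + u2 s = 0).
  { intros s Hs HN. destruct (ham s Hs HN) as [_ [Dly _]].
    pose proof (derive_eq0_of_const_on _ 0 a b s _ (fun r Hr => proj1 (abnormal_lam r Hr)) Hs Dly)
      as Hdly.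
    rewrite lam_z_const, gamma_y_const in Hdly by exact Hs.
    pose proof lam_z_mid_neq0.
    destruct (Rmult_integral (u1 s + u2 s) (pz (lam mid) * (2 * py (gamma mid))))
      as [|Hprod]; [lra|assumption|].
    exfalso; destruct (Rmult_integral _ _ Hprod); [contradiction|lra]. }
  intros t Ht. apply pt_ext.
  - apply (const_on_arc (fun s => px (gamma s))); [apply gamma_ac| |exact Ht]. intros s Hs HN.
    destruct (ham s Hs HN) as [_ [_ [_ [Dx _]]]]. rewrite (Hsum s Hs HN) in Dx. exact Dx.
  - exact (gamma_y_const t Ht).
  - apply (const_on_arc (fun s => pz (gamma s))); [apply gamma_ac| |exact Ht]. intros s Hs HN.
    destruct (ham s Hs HN) as [_ [_ [_ [_ [_ Dz]]]]]. rewrite (Hsum s Hs HN), Rmult_0_l in Dz.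
    exact Dz.
Qed.

Lemma abnormal_arc_on_line : ~ (exists c, forall t, a < t < b -> gamma t = c) ->
  ae_on (fun t => a < t < b) (fun t => u1 t = u2 t) /\
  exists z0, forall t, a < t < b -> py (gamma t) = 0 /\ pz (gamma t) = z0.
Proof.
  intros Hnc. pose proof (gamma_y_mid_zero Hnc) as Hy0. split.
  - exists N; split; [exact N_null|exact controls_eq].
  - exists (pz (gamma mid)); intros t Ht. split.
    + rewrite (gamma_y_const t Ht); exact Hy0.
    + exact (gamma_z_const_of_y_zero Hy0 t Ht).
Qed.

End AbnormalArc.

Lemma null_empty : null (fun _ => False).
Proof.
  intros eps Heps. exists (fun _ => 0), (fun _ => 0).
  split; [intros; lra|]. split; [intros t []|].
  intros n. rewrite <- fsum_S_sum_f_R0, (fsum_ext _ (fun _ => 0)), fsum_zero; [lra|].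
  intros; ring.
Qed.

Lemma abs_cont_const K a b : abs_cont (fun _ => K) a b.
Proof.
  intros eps Heps. exists 1; split; [lra|]. intros n x y _ _ _.
  rewrite (fsum_ext _ (fun _ => 0)), fsum_zero; [lra|].
  intros; rewrite Rminus_diag, Rabs_R0; reflexivity.
Qed.

Definition lam_vertical : R -> pt := fun _ => mkpt 0 0 1.

Lemma lam_vertical_abnormal gamma t : py (gamma t) = 0 ->
  phi1 gamma lam_vertical t = 0 /\ phi2 gamma lam_vertical t = 0.
Proof.
  intros Hy; rewrite phi1E, phi2E, Hy.
  unfold lam_vertical, mkpt, px, py, pz; simpl; split; ring.
Qed.

Lemma line_hamilton_eqs gamma u1 u2 t : py (gamma t) = 0 ->
  derivable_pt_lim (fun s => px (gamma s)) t
    (u1 t * px (Y1 (gamma t)) + u2 t * px (Y2 (gamma t))) ->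
  derivable_pt_lim (fun s => py (gamma s)) t
    (u1 t * py (Y1 (gamma t)) + u2 t * py (Y2 (gamma t))) ->
  derivable_pt_lim (fun s => pz (gamma s)) t
    (u1 t * pz (Y1 (gamma t)) + u2 t * pz (Y2 (gamma t))) ->
  hamilton_eqs gamma lam_vertical u1 u2 t.
Proof.
  intros Hy Dx Dy Dz. destruct (velocityE (gamma t) (u1 t) (u2 t)) as [Ex [Ey Ez]].
  rewrite Ex in Dx; rewrite Ey in Dy; rewrite Ez in Dz.
  unfold hamilton_eqs, lam_vertical. rewrite Hy in Dz |- *.
  replace (- ((u1 t + u2 t) * (pz (mkpt 0 0 1) * (2 * 0)))) with 0 by ring.
  repeat split; (assumption || apply derivable_pt_lim_const).
Qed.

Lemma line_trajectory_abnormal_lift T gamma u1 u2 z0 : admissible T gamma u1 u2 ->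
  (forall t, 0 <= t <= T -> py (gamma t) = 0 /\ pz (gamma t) = z0) ->
  extremal_pair T gamma u1 u2 lam_vertical /\ abnormal_on gamma lam_vertical 0 T.
Proof.
  intros Hadm Hline.
  assert (Hy : forall t, 0 <= t <= T -> py (gamma t) = 0) by (intros; apply Hline; assumption).
  split; [|intros t Ht; apply lam_vertical_abnormal, Hy; lra].
  split; [exact Hadm|]. split.
  { exact (conj (abs_cont_const 0 0 T) (conj (abs_cont_const 0 0 T) (abs_cont_const 1 0 T))). }
  split.
  { intros t _ H; unfold lam_vertical, mkpt in H; injection H; lra. }
  split.
  { destruct Hadm as [_ [_ [_ [_ [_ [N [HN Hvel]]]]]]].
    exists N; split; [exact HN|]. intros t Ht HNt. apply hamilton_atE.
    destruct (Hvel t Ht HNt) as [Dx [Dy Dz]].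
    exact (line_hamilton_eqs gamma u1 u2 t (Hy t ltac:(lra)) Dx Dy Dz). }
  exists 0; split; [lra|]. exists (fun _ => False); split; [exact null_empty|].
  intros t Ht _. destruct (lam_vertical_abnormal gamma t (Hy t Ht)) as [-> ->].
  rewrite Rabs_R0; split; ring.
Qed.

Theorem mainTheorem12 :
  (forall (T : R) (gamma : R -> pt) (u1 u2 : R -> R) (lam : R -> pt) (a b : R),
     extremal_pair T gamma u1 u2 lam ->
     0 <= a -> a < b -> b <= T ->
     abnormal_on gamma lam a b ->
     ~ (exists c : pt, forall t, a < t < b -> gamma t = c) ->
     ae_on (fun t => a < t < b) (fun t => u1 t = u2 t) /\
     exists z0 : R, forall t, a < t < b -> py (gamma t) = 0 /\ pz (gamma t) = z0)
  /\
  (forall (T : R) (gamma : R -> pt) (u1 u2 : R -> R) (z0 : R),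
     admissible T gamma u1 u2 ->
     (forall t, 0 <= t <= T -> py (gamma t) = 0 /\ pz (gamma t) = z0) ->
     exists (v1 v2 : R -> R) (lam : R -> pt),
       extremal_pair T gamma v1 v2 lam /\ abnormal_on gamma lam 0 T).
Proof.
  split.
  - intros T gamma u1 u2 lam a b [[_ [Hgamma _]] [Hlam [Hneq0 [[N [HN Hham]] _]]]] Ha Hab Hb.
    apply (abnormal_arc_on_line T a b gamma lam u1 u2 N Hgamma Hlam Hneq0 Ha Hab Hb HN).
    intros t Ht HNt; apply hamilton_atE, Hham; [lra|exact HNt].
  - intros T gamma u1 u2 z0 Hadm Hline.
    exists u1, u2, lam_vertical; exact (line_trajectory_abnormal_lift T gamma u1 u2 z0 Hadm Hline).
Qed.
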